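(* The interval-sphere model structure on $p\mathsf{Ch}^*_\mathbb{Q}$ is compactly generated: every domain object of a map in $\mathbb{I}$ is compact with respect to relative sequential $\mathbb{I}$-cell complexes.
   Context: $p\mathsf{Ch}^*_\mathbb{Q}=\mathsf{Fun}([0,\infty),\mathsf{Ch}^*_\mathbb{Q})$, non-negatively graded rational cochain complexes. $S^k=\mathbb{Q}$ in degree $k$; $D^k$ ($k\ge1$) is $\mathbb{Q}$ in degrees $k-1,k$ with identity differential; $D^0=0$. $\mathbb{S}^k_{[s,t)}$ ($0\le s<t<\infty$) is $0$ at $r<s$, $S^k$ at $s\le r<t$, $D^k$ at $r\ge t$; $\mathbb{S}^k_{[s,\infty)}$ is $0$ at $r<s$, $S^k$ at $r\ge s$; $\mathbb{D}^k_s$ is $0$ at $r<s$, $D^k$ at $r\ge s$ (structure maps identities/inclusions). The interval-sphere model structure has weak equivalences the pointwise quasi-isomorphisms, generating cofibrations $\mathbb{I}=\{\mathbb{S}^k_{[s,t)}\to\mathbb{D}^k_s: k\in\mathbb{N},0\le s<t\le\infty\}$ and generating trivial cofibrations $\{\mathbb{D}^k_t\to\mathbb{D}^k_s:0\le s<t<\infty\}\cup\{0\to\mathbb{D}^k_s\}$. A relative sequential $\mathbb{I}$-cell complex is a map $\mathbb{X}\to\mathbb{Y}=\mathrm{colim}_{i\in\omega}\mathbb{Y}_i$ with $\mathbb{Y}_0=\mathbb{X}$ and each $\mathbb{Y}_{i+1}$ a pushout of $\mathbb{Y}_i$ along a direct sum (over an arbitrary set) of maps in $\mathbb{I}$. An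 object $\mathbb{U}$ is compact with respect to such complexes if $\mathrm{colim}_i\mathrm{Hom}(\mathbb{U},\mathbb{Y}_i)\to\mathrm{Hom}(\mathbb{U},\mathbb{Y})$ is a bijection for each of them. *)

From HB Require Import structures.
From Stdlib Require Import Reals Relation_Operators.
From mathcomp Require Import all_boot all_order all_algebra.
From mathcomp Require Import Rstruct.
From mathcomp Require Import zify.
Unset Strict Implicit.
Unset Printing Implicit Defensive.
Import Order.TTheory GRing.Theory Num.Theory.
Local Open Scope ring_scope.

Definition nnR := {r : R | 0 <= r}.

(* Objects of pCh*_Q = Fun([0,oo), Ch*_Q): non-negatively graded rational *)
(* cochain complexes (degrees n : nat, differential of degree +1), with   *)
(* structure chain maps X(r) -> X(r') for r <= r', functorially.          *)
Record pch := PCh {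
  pobj : nnR -> nat -> lmodType rat;
  pd : forall r n, pobj r n -> pobj r n.+1;
  pmap : forall (r r' : nnR), val r <= val r' -> forall n, pobj r n -> pobj r' n;
  pd_lin : forall r n (a : rat) x y, pd r n (a *: x + y) = a *: pd r n x + pd r n y;
  pmap_lin : forall r r' h n (a : rat) x y,
      pmap r r' h n (a *: x + y) = a *: pmap r r' h n x + pmap r r' h n y;
  pdd : forall r n x, pd r n.+1 (pd r n x) = 0;
  pmap_d : forall r r' h n x, pd r' n (pmap r r' h n x) = pmap r r' h n.+1 (pd r n x);
  pmap_id : forall r h n x, pmap r r h n x = x;
  pmap_comp : forall r1 r2 r3 h12 h23 h13 n x,
      pmap r2 r3 h23 n (pmap r1 r2 h12 n x) = pmap r1 r3 h13 n x
}.

Record phom (X Y : pch) := PHom {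
  hc : forall r n, pobj X r n -> pobj Y r n;
  hc_lin : forall r n (a : rat) x y, hc r n (a *: x + y) = a *: hc r n x + hc r n y;
  hc_d : forall r n x, pd Y r n (hc r n x) = hc r n.+1 (pd X r n x);
  hc_nat : forall r r' h n x, pmap Y r r' h n (hc r n x) = hc r' n (pmap X r r' h n x)
}.

Arguments hc {X Y} f r n x : rename.
Arguments hc_lin {X Y} f r n a x y : rename.
Arguments hc_d {X Y} f r n x : rename.
Arguments hc_nat {X Y} f r r' h n x : rename.

Definition heq (X Y : pch) (f g : phom X Y) : Prop :=
  forall r n x, hc f r n x = hc g r n x.

(* Composition in diagrammatic order: hcomp f g = g o f. *)
Definition hcomp (X Y Z : pch) (f : phom X Y) (g : phom Y Z) : phom X Z.
Proof.
refine (@PHom X Z (fun r n x => hc g r n (hc f r n x)) _ _ _).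
- by move=> r n a x y; rewrite !hc_lin.
- by move=> r n x; rewrite !hc_d.
- by move=> r r' h n x; rewrite !hc_nat.
Defined.
Arguments heq {X Y} f g.
Arguments hcomp {X Y Z} f g.

(* Auxiliary: objects whose spaces are 0 or Q (as 'rV[rat]_0 / 'rV[rat]_1) *)
(* with all non-trivial differentials / structure maps the identity of Q  *)
(* (multiplication by the all-ones matrix).                               *)
Definition onesmx (a b : nat) : 'M[rat]_(a, b) := const_mx 1.

Lemma onesmx_mul (a b c : nat) :
  onesmx a b *m onesmx b c = const_mx (b%:R).
Proof.
apply/matrixP => i j; rewrite !mxE.
rewrite (eq_bigr (fun _ => 1)); last by move=> k _; rewrite !mxE mulr1.
by rewrite sumr_const card_ord.
Qed.

Lemma onesmx_mul2 (a c : nat) (b : bool) (u : 'rV[rat]_a) :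
  u *m onesmx a b *m onesmx b c = if b then u *m onesmx a c else 0.
Proof.
rewrite -mulmxA onesmx_mul; case: b => /=.
  by rewrite /onesmx.
by rewrite (_ : const_mx _ = 0) ?mulmx0 //; apply/matrixP => i j; rewrite !mxE.
Qed.

Lemma onesmx0 (a c : bool) (u : 'rV[rat]_a) :
  ~~ a || ~~ c -> u *m onesmx a c = 0.
Proof.
case: a u => [|] u; case: c => //= _; first exact: thinmx0.
  by rewrite [u]thinmx0 mul0mx.
by rewrite [u]thinmx0 mul0mx.
Qed.

Lemma onesmx1 (a : bool) (u : 'rV[rat]_a) : u *m onesmx a a = u.
Proof.
case: a u => u /=.
  rewrite (_ : onesmx 1 1 = 1%:M) ?mulmx1 //.
  by apply/matrixP => i j; rewrite !mxE !ord1.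
by rewrite [u]thinmx0 mul0mx.
Qed.

Lemma onesmx_lin (a b : nat) (k : rat) (x y : 'rV[rat]_a) :
  (k *: x + y) *m onesmx a b = k *: (x *m onesmx a b) + y *m onesmx a b.
Proof. by rewrite mulmxDl scalemxAl. Qed.

Section Mk01.
Variable dim : nnR -> nat -> bool.
Hypothesis Hdd : forall r n, ~~ [&& dim r n, dim r n.+1 & dim r n.+2].
Hypothesis Hcomp : forall (r1 r2 r3 : nnR) n, val r1 <= val r2 -> val r2 <= val r3 ->
  dim r1 n -> dim r3 n -> dim r2 n.
Hypothesis Hdnat : forall (r r' : nnR) n, val r <= val r' ->
  dim r n -> dim r' n.+1 -> dim r' n && dim r n.+1.

Definition mk01 : pch.
Proof.
refine (@PCh (fun r n => 'rV[rat]_(dim r n) : lmodType rat)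
   (fun r n u => u *m onesmx _ _) (fun r r' h n u => u *m onesmx _ _) _ _ _ _ _ _).
- by move=> *; apply: onesmx_lin.
- by move=> *; apply: onesmx_lin.
- move=> r n x /=; rewrite onesmx_mul2; case: ifP => // h1; rewrite onesmx0 //.
  by move: (Hdd r n); rewrite h1 /=; case: (dim r n); case: (dim r n.+2).
- move=> r r' h n x /=; rewrite !onesmx_mul2.
  case E1: (dim r' n); case E2: (dim r n.+1) => //.
  + apply: onesmx0; rewrite -negb_and; apply/negP => /andP [a b].
    by move: (Hdnat _ _ _ h a b); rewrite E2 andbF.
  + apply: esym; apply: onesmx0; rewrite -negb_and; apply/negP => /andP [a b].
    by move: (Hdnat _ _ _ h a b); rewrite E1.
- by move=> r h n x /=; apply: onesmx1.
- move=> r1 r2 r3 h12 h23 h13 n x /=; rewrite onesmx_mul2.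
  case E: (dim r2 n) => //; apply: esym; apply: onesmx0.
  rewrite -negb_and; apply/negP => /andP [a b]; by move: (Hcomp _ _ _ _ h12 h23 a b); rewrite E.
Defined.
End Mk01.

Section Mk01Hom.
Variables (dX dY : nnR -> nat -> bool).
Hypotheses (HddX : forall r n, ~~ [&& dX r n, dX r n.+1 & dX r n.+2])
  (HcompX : forall (r1 r2 r3 : nnR) n, val r1 <= val r2 -> val r2 <= val r3 ->
     dX r1 n -> dX r3 n -> dX r2 n)
  (HdnatX : forall (r r' : nnR) n, val r <= val r' ->
     dX r n -> dX r' n.+1 -> dX r' n && dX r n.+1)
  (HddY : forall r n, ~~ [&& dY r n, dY r n.+1 & dY r n.+2])
  (HcompY : forall (r1 r2 r3 : nnR) n, val r1 <= val r2 -> val r2 <= val r3 ->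
     dY r1 n -> dY r3 n -> dY r2 n)
  (HdnatY : forall (r r' : nnR) n, val r <= val r' ->
     dY r n -> dY r' n.+1 -> dY r' n && dY r n.+1).
Hypothesis HhomD : forall r n, dX r n -> dY r n.+1 -> dY r n && dX r n.+1.
Hypothesis HhomN : forall (r r' : nnR) n, val r <= val r' ->
  dX r n -> dY r' n -> dY r n && dX r' n.

Definition mk01hom :
  phom (mk01 dX HddX HcompX HdnatX) (mk01 dY HddY HcompY HdnatY).
Proof.
refine (@PHom (mk01 dX HddX HcompX HdnatX) (mk01 dY HddY HcompY HdnatY)
   (fun r n u => u *m onesmx _ _) _ _ _).
- by move=> *; apply: onesmx_lin.
- move=> r n x /=; rewrite !onesmx_mul2.
  case E1: (dY r n); case E2: (dX r n.+1) => //.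
  + apply: onesmx0; rewrite -negb_and; apply/negP => /andP [a b].
    by move: (HhomD _ _ a b); rewrite E2 andbF.
  + apply: esym; apply: onesmx0; rewrite -negb_and; apply/negP => /andP [a b].
    by move: (HhomD _ _ a b); rewrite E1.
- move=> r r' h n x /=; rewrite !onesmx_mul2.
  case E1: (dY r n); case E2: (dX r' n) => //.
  + apply: onesmx0; rewrite -negb_and; apply/negP => /andP [a b].
    by move: (HhomN _ _ _ h a b); rewrite E2 andbF.
  + apply: esym; apply: onesmx0; rewrite -negb_and; apply/negP => /andP [a b].
    by move: (HhomN _ _ _ h a b); rewrite E1.
Defined.
End Mk01Hom.

(* An upper bound t of an interval is an element of (0,oo]:  Some t = t,  *)
(* None = oo.                                                              *)
Definition before (r : R) (t : option R) : bool :=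
  if t is Some t then r < t else true.
Definition ltRo (s : R) (t : option R) : bool :=
  if t is Some t then s < t else true.

(* Dimension (0 or 1) of the degree-n part at time r of S^k_[s,t):        *)
(* S^k (Q in degree k) for s <= r < t, D^k (Q in degrees k-1, k, k >= 1;  *)
(* D^0 = 0) for r >= t, and 0 for r < s.                                   *)
Definition sdim (k : nat) (s : R) (t : option R) (r : nnR) (n : nat) : bool :=
  ((s <= val r) && before (val r) t && (n == k))
  || ((s <= val r) && ~~ before (val r) t && (0 < k)%N && ((n == k) || (n.+1 == k))).

Lemma before_mono (r r' : R) t : r <= r' -> before r' t -> before r t.
Proof. by case: t => //= t h h'; apply: le_lt_trans h h'. Qed.

Lemma sdim_dd k s t r n : ~~ [&& sdim k s t r n, sdim k s t r n.+1 & sdim k s t r n.+2].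
Proof.
rewrite /sdim; case: (s <= val r); case: before => /=; lia.
Qed.

Lemma sdim_comp k s t (r1 r2 r3 : nnR) n : val r1 <= val r2 -> val r2 <= val r3 ->
  sdim k s t r1 n -> sdim k s t r3 n -> sdim k s t r2 n.
Proof.
move=> h12 h23; rewrite /sdim.
have hA : s <= val r1 -> s <= val r2 by move=> h; apply: le_trans h h12.
have hB3 : before (val r3) t -> before (val r2) t by apply: before_mono.
have hB1 : before (val r2) t -> before (val r1) t by apply: before_mono.
move: hA hB3 hB1.
case: (s <= val r1); case: (s <= val r2); case: (s <= val r3);
case: (before (val r1) t); case: (before (val r2) t); case: (before (val r3) t) => //=;
lia.
Qed.

Lemma sdim_dnat k s t (r r' : nnR) n : val r <= val r' ->
  sdim k s t r n -> sdim k s t r' n.+1 -> sdim k s t r' n && sdim k s t r n.+1.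
Proof.
move=> h; rewrite /sdim.
have hA : s <= val r -> s <= val r' by move=> h'; apply: le_trans h' h.
have hB : before (val r') t -> before (val r) t by apply: before_mono.
move: hA hB.
case: (s <= val r); case: (s <= val r');
case: (before (val r) t); case: (before (val r') t) => //=; lia.
Qed.

Definition Sph (k : nat) (s : R) (t : option R) : pch :=
  mk01 (sdim k s t) (sdim_dd k s t) (sdim_comp k s t) (sdim_dnat k s t).

(* D^k_s : 0 for r < s, D^k for r >= s.  It is (literally) given by the   *)
(* same dimension function with the empty S-part [s,s).                   *)
Definition Dsk (k : nat) (s : R) : pch := Sph k s (Some s).

Lemma sdim_D k s r n : sdim k s (Some s) r n =
  (s <= val r) && (0 < k)%N && ((n == k) || (n.+1 == k)).
Proof.
rewrite /sdim /=; case: leP => h /=; last by [].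
by [].
Qed.

Lemma incl_homD k s t r n : sdim k s t r n -> sdim k s (Some s) r n.+1 ->
  sdim k s (Some s) r n && sdim k s t r n.+1.
Proof.
rewrite !sdim_D /sdim; case: (s <= val r); case: before => /=; lia.
Qed.

Lemma incl_homN k s t (r r' : nnR) n : val r <= val r' ->
  sdim k s t r n -> sdim k s (Some s) r' n -> sdim k s (Some s) r n && sdim k s t r' n.
Proof.
move=> h; rewrite !sdim_D /sdim.
have hA : s <= val r -> s <= val r' by move=> h'; apply: le_trans h' h.
have hB : before (val r') t -> before (val r) t by apply: before_mono.
move: hA hB.
case: (s <= val r); case: (s <= val r');
case: (before (val r) t); case: (before (val r') t) => //=; lia.
Qed.

Definition Igen (k : nat) (s : R) (t : option R) : phom (Sph k s t) (Dsk k s) :=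
  mk01hom (sdim k s t) (sdim k s (Some s)) (sdim_dd k s t) (sdim_comp k s t) (sdim_dnat k s t) (sdim_dd k s (Some s)) (sdim_comp k s (Some s)) (sdim_dnat k s (Some s))
    (incl_homD k s t) (incl_homN k s t).

Set Implicit Arguments.

Definition is_coprod (J : Type) (A : J -> pch) (C : pch)
    (inj : forall j, phom (A j) C) : Prop :=
  forall (Z : pch) (f : forall j, phom (A j) Z),
    exists g : phom C Z,
      (forall j, heq (hcomp (inj j) g) (f j)) /\
      (forall g' : phom C Z, (forall j, heq (hcomp (inj j) g') (f j)) -> heq g' g).

Definition is_pushout (A B C P : pch) (f : phom A B) (g : phom A C)
    (i : phom B P) (j : phom C P) : Prop :=
  heq (hcomp f i) (hcomp g j) /\
  forall (Z : pch) (u : phom B Z) (v : phom C Z),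
    heq (hcomp f u) (hcomp g v) ->
    exists w : phom P Z,
      heq (hcomp i w) u /\ heq (hcomp j w) v /\
      (forall w' : phom P Z, heq (hcomp i w') u -> heq (hcomp j w') v -> heq w' w).

Definition is_seq_colim (Y : nat -> pch) (y : forall i, phom (Y i) (Y i.+1))
    (Yinf : pch) (c : forall i, phom (Y i) Yinf) : Prop :=
  (forall i, heq (hcomp (y i) (c i.+1)) (c i)) /\
  forall (Z : pch) (z : forall i, phom (Y i) Z),
    (forall i, heq (hcomp (y i) (z i.+1)) (z i)) ->
    exists w : phom Yinf Z,
      (forall i, heq (hcomp (c i) w) (z i)) /\
      (forall w' : phom Yinf Z, (forall i, heq (hcomp (c i) w') (z i)) -> heq w' w).

Definition I_cell_step (A B : pch) (f : phom A B) : Prop :=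
  exists (J : Type) (k : J -> nat) (s : J -> R) (t : J -> option R),
    (forall j, 0 <= s j /\ ltRo (s j) (t j)) /\
    exists (SJ DJ : pch)
           (iS : forall j, phom (Sph (k j) (s j) (t j)) SJ)
           (iD : forall j, phom (Dsk (k j) (s j)) DJ),
      is_coprod iS /\ is_coprod iD /\
      exists (sigma : phom SJ DJ) (a : phom SJ A) (g : phom DJ B),
        (forall j, heq (hcomp (iS j) sigma) (hcomp (Igen (k j) (s j) (t j)) (iD j))) /\
        is_pushout sigma a g f.

Definition rel_seq_I_cell (Y : nat -> pch) (y : forall i, phom (Y i) (Y i.+1))
    (Yinf : pch) (c : forall i, phom (Y i) Yinf) : Prop :=
  (forall i, I_cell_step (y i)) /\ is_seq_colim y c.

(* The colimit of sets colim_i Hom(U, Y i): the disjoint union of the      *)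
(* Hom(U, Y i) modulo the equivalence relation generated by heq and by    *)
(* (i, g) ~ (i+1, y_i o g).                                                *)
Inductive colim_step (U : pch) (Y : nat -> pch) (y : forall i, phom (Y i) (Y i.+1)) :
    {i : nat & phom U (Y i)} -> {i : nat & phom U (Y i)} -> Prop :=
| cs_heq i (g g' : phom U (Y i)) :
    heq g g' -> colim_step y (existT _ i g) (existT _ i g')
| cs_map i (g : phom U (Y i)) :
    colim_step y (existT _ i g) (existT _ i.+1 (hcomp g (y i))).

(* U is compact w.r.t. relative sequential I-cell complexes: the canonical *)
(* map colim_i Hom(U, Y i) -> Hom(U, Yinf) is a bijection.                 *)
Definition compact_rel_I_cell (U : pch) : Prop :=
  forall (Y : nat -> pch) (y : forall i, phom (Y i) (Y i.+1))
         (Yinf : pch) (c : forall i, phom (Y i) Yinf),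
    rel_seq_I_cell y c ->
    (forall f : phom U Yinf, exists i (g : phom U (Y i)), heq (hcomp g (c i)) f) /\
    (forall i j (g : phom U (Y i)) (g' : phom U (Y j)),
        heq (hcomp g (c i)) (hcomp g' (c j)) ->
        clos_refl_sym_trans _ (colim_step y) (existT _ i g) (existT _ j g')).

(* S^k_[s,t) is finitely presented: it is generated by a class e in degree k at
   time s and, when t < oo and k >= 1, by a class f in degree k-1 at time t,
   subject to de = 0 and df = e|_t (and to e|_t = 0 when t < oo and k = 0).
   A map out of it is therefore a finite amount of data satisfying finitely many
   equations.  Comparing a sequential colimit with the explicit pointwise colimit
   (staged elements of the Y_i(r)_n up to eventual equality) through its
   universal property shows that it is computed pointwise, so the data lift to a
   finite stage and the equations, as well as any equality between two lifts,
   already hold at a finite stage. *)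

From HB Require Import structures.
From Stdlib Require Import Reals Relation_Operators.
From mathcomp Require Import all_boot all_order all_algebra.
From mathcomp Require Import Rstruct boolp zify.
From Pilot Require Import Defs.
Import Order.TTheory GRing.Theory Num.Theory.
Local Open Scope ring_scope.

Section LinearFun.
Variables (R : pzRingType) (U V : lmodType R) (f : U -> V).
Hypothesis f_lin : linear f.

Lemma linear_fun0 : f 0 = 0.
Proof. by have := f_lin (-1) 0 0; rewrite scaler0 addr0 scaleN1r addNr. Qed.

Lemma linear_funD x y : f (x + y) = f x + f y.
Proof. by have := f_lin 1 x y; rewrite !scale1r. Qed.

Lemma linear_funZ a x : f (a *: x) = a *: f x.
Proof. exact: scalable_linear. Qed.

End LinearFun.

Arguments linear_fun0 {R U V f}.
Arguments linear_funD {R U V f}.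
Arguments linear_funZ {R U V f}.

Section PhomLinear.
Variables (X W : pch) (f : phom X W) (r : nnR) (n : nat).

Lemma hc0 : hc f r n 0 = 0.
Proof. exact: (linear_fun0 (hc_lin f r n)). Qed.

Lemma hcD x x' : hc f r n (x + x') = hc f r n x + hc f r n x'.
Proof. exact: (linear_funD (hc_lin f r n)). Qed.

Lemma hcZ a x : hc f r n (a *: x) = a *: hc f r n x.
Proof. exact: (linear_funZ (hc_lin f r n)). Qed.

End PhomLinear.

Definition hid (X : pch) : phom X X :=
  @PHom X X (fun _ _ x => x) (fun _ _ _ _ _ => erefl) (fun _ _ _ => erefl)
    (fun _ _ _ _ _ => erefl).

Definition hzero (X W : pch) : phom X W.
Proof.
refine (@PHom X W (fun _ _ _ => 0) _ _ _) => *; rewrite ?scaler0 ?addr0 //.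
- exact: linear_fun0 (pd_lin W _ _).
- exact: linear_fun0 (pmap_lin W _ _ _ _).
Defined.

Definition eventually (P : nat -> Prop) := exists M0, forall M, (M0 <= M)%N -> P M.

Lemma eventually_ge m : eventually (fun M => (m <= M)%N).
Proof. by exists m. Qed.

Lemma eventually_and {P Q : nat -> Prop} :
  eventually P -> eventually Q -> eventually (fun M => P M /\ Q M).
Proof.
move=> [a Pa] [b Qb]; exists (maxn a b) => M; rewrite geq_max => /andP[aM bM].
by split; [apply: Pa | apply: Qb].
Qed.

Lemma eventually_mono {P Q : nat -> Prop} :
  (forall M, P M -> Q M) -> eventually P -> eventually Q.
Proof. by move=> PQ [a Pa]; exists a => M /Pa /PQ. Qed.

Lemma eventually_witness {P : nat -> Prop} : eventually P -> exists M, P M.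
Proof. by case=> M0 PM; exists M0; apply: PM. Qed.

Lemma eventually_if (b : bool) (P : nat -> Prop) :
  (b -> eventually P) -> eventually (fun M => b -> P M).
Proof. by case: b => [/(_ isT)|_]; [apply: eventually_mono | exists 0%N]. Qed.

(** * Sequential colimits are computed pointwise *)

Section SeqColim.
Context {Y : nat -> pch} (y : forall i, phom (Y i) (Y i.+1)).

Definition hcast {i j} (e : i = j) : phom (Y i) (Y j) := ecast j (phom (Y i) (Y j)) e (hid (Y i)).

(* The transition map Y_i -> Y_M, and the zero map when M < i. *)
Fixpoint stage_map i M : phom (Y i) (Y M) :=
  if i =P M is ReflectT e then hcast e
  else if M is M'.+1 then hcomp (stage_map i M') (y M') else hzero _ _.

Lemma stage_map_refl i : stage_map i i = hid (Y i).
Proof.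
by case: i => [|i] /=; case: eqP => // e; rewrite (eq_irrelevance e erefl).
Qed.

Lemma stage_map_id i r n x : hc (stage_map i i) r n x = x.
Proof. by rewrite stage_map_refl. Qed.

Lemma stage_mapS i M r n x : (i <= M)%N ->
  hc (stage_map i M.+1) r n x = hc (y M) r n (hc (stage_map i M) r n x).
Proof. by move=> iM /=; case: eqP => // e; exfalso; move: iM; rewrite e ltnn. Qed.

Lemma stage_map_comp i m M r n x : (i <= m <= M)%N ->
  hc (stage_map m M) r n (hc (stage_map i m) r n x) = hc (stage_map i M) r n x.
Proof.
case/andP=> im; elim: M => [|M IH]; first by rewrite leqn0 => /eqP <-; rewrite stage_map_id.
rewrite leq_eqVlt => /predU1P[<-|mM]; first by rewrite stage_map_id.
by rewrite !stage_mapS ?IH // (leq_trans im).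
Qed.

Lemma colim_step_stage_map {U : pch} {i M} (g : phom U (Y i)) : (i <= M)%N ->
  clos_refl_sym_trans _ (colim_step y) (existT _ i g) (existT _ M (hcomp g (stage_map i M))).
Proof.
have refl m (h : phom U (Y m)) :
    colim_step y (existT _ m h) (existT _ m (hcomp h (stage_map m m))).
  by apply: cs_heq => r n x; rewrite /= stage_map_id.
elim: M => [|M IH]; first by rewrite leqn0 => /eqP<-; apply/rst_step/refl.
rewrite leq_eqVlt => /predU1P[<-|iM]; first exact/rst_step/refl.
apply: rst_trans (IH iM) _; apply: rst_trans (rst_step _ _ _ _ (cs_map _ _)) _.
by apply/rst_step/cs_heq => r n x; rewrite /= stage_mapS.
Qed.

Section Point.
Context {r : nnR} {n : nat}.

Definition staged := {i : nat & pobj (Y i) r n}.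
Definition staged_in {i} (x : pobj (Y i) r n) : staged := Tagged (fun j => pobj (Y j) r n) x.

Definition at_stage M (a : staged) : pobj (Y M) r n := hc (stage_map (tag a) M) r n (tagged a).

Definition eveq (a b : staged) := eventually (fun M => at_stage M a = at_stage M b).

Definition eveqb : rel staged := fun a b => `[< eveq a b >].

Lemma eveqb_refl : reflexive eveqb.
Proof. by move=> a; apply/asboolP; exists 0%N. Qed.

Lemma eveqb_sym : symmetric eveqb.
Proof.
suff imp a b : eveqb a b -> eveqb b a by move=> a b; apply/idP/idP; apply: imp.
by move/asboolP=> ab; apply/asboolP; apply: eventually_mono ab => M ->.
Qed.

Lemma eveqb_trans : transitive eveqb.
Proof.
move=> b a c /asboolP ab /asboolP bc; apply/asboolP.
by apply: eventually_mono (eventually_and ab bc) => M [-> ->].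
Qed.

Canonical eveq_equiv := EquivRel eveqb eveqb_refl eveqb_sym eveqb_trans.

Definition colim_space := {eq_quot eveqb}%qT.

Definition to_colim (a : staged) : colim_space := (\pi_colim_space a)%qT.

Definition qstage M (q : colim_space) := at_stage M (repr q).

Lemma pi_eveq a b : to_colim a = to_colim b <-> eveq a b.
Proof. by split=> [/eqmodP/asboolP | ab]; last apply/eqmodP/asboolP. Qed.

Lemma qstage_pi a : eventually (fun M => qstage M (to_colim a) = at_stage M a).
Proof. by apply/(pi_eveq (repr (to_colim a))); rewrite /to_colim reprK. Qed.

Lemma colim_eq q q' :
  eventually (fun M => qstage M q = qstage M q') -> q = q'.
Proof. by move=> qq; rewrite -[q]reprK -[q']reprK; apply/pi_eveq. Qed.

Definition staged0 : staged := staged_in (0 : pobj (Y 0) r n).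

Lemma at_stage0 M : at_stage M staged0 = 0.
Proof. exact: hc0. Qed.

Definition colim_zero : colim_space := to_colim staged0.
Definition colim_scale al (q : colim_space) : colim_space :=
  to_colim (staged_in (al *: tagged (repr q))).
Definition colim_opp (q : colim_space) := colim_scale (-1) q.
Definition colim_add (q q' : colim_space) : colim_space :=
  let m := maxn (tag (repr q)) (tag (repr q')) in
  to_colim (staged_in (at_stage m (repr q) + at_stage m (repr q'))).

Lemma qstage_zero : eventually (fun M => qstage M colim_zero = 0).
Proof. by apply: eventually_mono (qstage_pi staged0) => M ->; apply: at_stage0. Qed.

Lemma qstage_scale al q :
  eventually (fun M => qstage M (colim_scale al q) = al *: qstage M q).
Proof.
apply: eventually_mono (qstage_pi (staged_in (al *: tagged (repr q)))) => M ->.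
by rewrite /at_stage /= hcZ.
Qed.

Lemma qstage_add q q' : eventually (fun M =>
  qstage M (colim_add q q') = qstage M q + qstage M q').
Proof.
pose m := maxn (tag (repr q)) (tag (repr q')).
have := eventually_and (qstage_pi (staged_in (at_stage m (repr q) + at_stage m (repr q'))))
  (eventually_ge m).
apply: eventually_mono => M [-> mM]; rewrite /at_stage /= hcD.
by rewrite !stage_map_comp // mM ?leq_maxl ?leq_maxr.
Qed.

Lemma colim_addA : associative colim_add.
Proof.
move=> a b c; apply: colim_eq.
have := eventually_and (eventually_and (qstage_add a (colim_add b c)) (qstage_add b c))
  (eventually_and (qstage_add (colim_add a b) c) (qstage_add a b)).
by apply: eventually_mono => M [[-> ->] [-> ->]]; rewrite addrA.
Qed.

Lemma colim_addC : commutative colim_add.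
Proof.
move=> a b; apply: colim_eq.
have := eventually_and (qstage_add a b) (qstage_add b a).
by apply: eventually_mono => M [-> ->]; rewrite addrC.
Qed.

Lemma colim_add0 : left_id colim_zero colim_add.
Proof.
move=> a; apply: colim_eq.
have := eventually_and (qstage_add colim_zero a) qstage_zero.
by apply: eventually_mono => M [-> ->]; rewrite add0r.
Qed.

Lemma colim_addN : left_inverse colim_zero colim_opp colim_add.
Proof.
move=> a; apply: colim_eq.
have := eventually_and (eventually_and (qstage_add (colim_opp a) a) qstage_zero)
  (qstage_scale (-1) a).
by apply: eventually_mono => M [[-> ->] ->]; rewrite scaleN1r addNr.
Qed.

Lemma colim_scaleA a b q : colim_scale a (colim_scale b q) = colim_scale (a * b) q.
Proof.
apply: colim_eq.
have := eventually_and (eventually_and (qstage_scale a (colim_scale b q))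
  (qstage_scale b q)) (qstage_scale (a * b) q).
by apply: eventually_mono => M [[-> ->] ->]; rewrite scalerA.
Qed.

Lemma colim_scale1 : left_id 1 colim_scale.
Proof.
move=> q; apply: colim_eq.
by apply: eventually_mono (qstage_scale 1 q) => M ->; rewrite scale1r.
Qed.

Lemma colim_scaleDr a q q' :
  colim_scale a (colim_add q q') = colim_add (colim_scale a q) (colim_scale a q').
Proof.
apply: colim_eq.
have := eventually_and (eventually_and (qstage_scale a (colim_add q q')) (qstage_add q q'))
  (eventually_and (qstage_add (colim_scale a q) (colim_scale a q'))
     (eventually_and (qstage_scale a q) (qstage_scale a q'))).
by apply: eventually_mono => M [[-> ->] [-> [-> ->]]]; rewrite scalerDr.
Qed.

Lemma colim_scaleDl q a b :
  colim_scale (a + b) q = colim_add (colim_scale a q) (colim_scale b q).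
Proof.
apply: colim_eq.
have := eventually_and (qstage_scale (a + b) q)
  (eventually_and (qstage_add (colim_scale a q) (colim_scale b q))
     (eventually_and (qstage_scale a q) (qstage_scale b q))).
by apply: eventually_mono => M [-> [-> [-> ->]]]; rewrite scalerDl.
Qed.

HB.instance Definition _ := Choice.on colim_space.
HB.instance Definition _ := GRing.isZmodule.Build colim_space
  colim_addA colim_addC colim_add0 colim_addN.
HB.instance Definition _ := GRing.Zmodule_isLmodule.Build rat colim_space
  colim_scaleA colim_scale1 colim_scaleDr colim_scaleDl.

End Point.

Arguments staged : clear implicits.
Arguments colim_space : clear implicits.

Lemma qstage_lin {r n} a (q q' : colim_space r n) : eventually (fun M =>
  qstage M (a *: q + q') = a *: qstage M q + qstage M q').
Proof.
have := eventually_and (qstage_add (a *: q) q') (qstage_scale a q).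
by apply: eventually_mono => M [-> ->].
Qed.

Definition staged_d {r n} (a : staged r n) : staged r n.+1 :=
  staged_in (pd (Y (tag a)) r n (tagged a)).

Definition staged_map {r r'} (h : val r <= val r') {n} (a : staged r n) : staged r' n :=
  staged_in (pmap (Y (tag a)) r r' h n (tagged a)).

Lemma at_stage_d r n M (a : staged r n) : at_stage M (staged_d a) = pd (Y M) r n (at_stage M a).
Proof. exact: esym (hc_d _ _ _ _). Qed.

Lemma at_stage_map r r' h n M (a : staged r n) :
  at_stage M (staged_map h a) = pmap (Y M) r r' h n (at_stage M a).
Proof. exact: esym (hc_nat _ _ _ _ _ _). Qed.

Definition colim_d {r n} (q : colim_space r n) : colim_space r n.+1 :=
  to_colim (staged_d (repr q)).

Definition colim_map {r r'} (h : val r <= val r') {n} (q : colim_space r n) : colim_space r' n :=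
  to_colim (staged_map h (repr q)).

Lemma qstage_d {r n} (q : colim_space r n) :
  eventually (fun M => qstage M (colim_d q) = pd (Y M) r n (qstage M q)).
Proof. by apply: eventually_mono (qstage_pi (staged_d (repr q))) => M ->; apply: at_stage_d. Qed.

Lemma qstage_map {r r'} h {n} (q : colim_space r n) : eventually (fun M =>
  qstage M (colim_map h q) = pmap (Y M) r r' h n (qstage M q)).
Proof.
by apply: eventually_mono (qstage_pi (staged_map h (repr q))) => M ->; apply: at_stage_map.
Qed.

Lemma colim_d_lin r n a (q q' : colim_space r n) :
  colim_d (a *: q + q') = a *: colim_d q + colim_d q'.
Proof.
apply: colim_eq.
have := eventually_and (eventually_and (qstage_d (a *: q + q')) (qstage_lin a q q'))
  (eventually_and (qstage_lin a (colim_d q) (colim_d q'))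
     (eventually_and (qstage_d q) (qstage_d q'))).
by apply: eventually_mono => M [[-> ->] [-> [-> ->]]]; rewrite pd_lin.
Qed.

Lemma colim_map_lin r r' h n a (q q' : colim_space r n) :
  colim_map h (a *: q + q') = a *: colim_map (r' := r') h q + colim_map h q'.
Proof.
apply: colim_eq.
have := eventually_and (eventually_and (qstage_map h (a *: q + q')) (qstage_lin a q q'))
  (eventually_and (qstage_lin a (colim_map h q) (colim_map h q'))
     (eventually_and (qstage_map h q) (qstage_map h q'))).
by apply: eventually_mono => M [[-> ->] [-> [-> ->]]]; rewrite pmap_lin.
Qed.

Lemma colim_dd r n (q : colim_space r n) : colim_d (colim_d q) = 0.
Proof.
apply: colim_eq.
have := eventually_and (eventually_and (qstage_d (colim_d q)) (qstage_d q))
  (@qstage_zero r n.+2).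
by apply: eventually_mono => M [[-> ->] ->]; rewrite pdd.
Qed.

Lemma colim_map_d r r' h n (q : colim_space r n) :
  colim_d (colim_map (r' := r') h q) = colim_map h (colim_d q).
Proof.
apply: colim_eq.
have := eventually_and (eventually_and (qstage_d (colim_map h q)) (qstage_map h q))
  (eventually_and (qstage_map h (colim_d q)) (qstage_d q)).
by apply: eventually_mono => M [[-> ->] [-> ->]]; rewrite pmap_d.
Qed.

Lemma colim_map_id r h n (q : colim_space r n) : colim_map h q = q.
Proof.
apply: colim_eq.
by apply: eventually_mono (qstage_map h q) => M ->; rewrite pmap_id.
Qed.

Lemma colim_map_comp r1 r2 r3 h12 h23 h13 n (q : colim_space r1 n) :
  colim_map (r := r2) (r' := r3) h23 (colim_map h12 q) = colim_map h13 q.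
Proof.
apply: colim_eq.
have := eventually_and (eventually_and (qstage_map h23 (colim_map h12 q))
  (qstage_map h12 q)) (qstage_map h13 q).
by apply: eventually_mono => M [[-> ->] ->]; rewrite (pmap_comp _ _ _ _ _ _ h13).
Qed.

Definition colim : pch := @PCh (fun r n => colim_space r n) (@colim_d) (@colim_map)
  colim_d_lin colim_map_lin colim_dd colim_map_d colim_map_id colim_map_comp.

Section Injections.
Variable i : nat.

Lemma colim_in_lin r n a (x x' : pobj (Y i) r n) :
  to_colim (staged_in (a *: x + x')) = a *: to_colim (staged_in x) + to_colim (staged_in x').
Proof.
apply: colim_eq.
have := eventually_and (eventually_and (qstage_pi (staged_in (a *: x + x')))
  (qstage_lin a (to_colim (staged_in x)) (to_colim (staged_in x'))))
  (eventually_and (qstage_pi (staged_in x)) (qstage_pi (staged_in x'))).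
by apply: eventually_mono => M [[-> ->] [-> ->]]; apply: hc_lin.
Qed.

Lemma colim_in_d r n (x : pobj (Y i) r n) :
  colim_d (to_colim (staged_in x)) = to_colim (staged_in (pd (Y i) r n x)).
Proof.
apply: colim_eq.
have := eventually_and (eventually_and (qstage_d (to_colim (staged_in x)))
  (qstage_pi (staged_in x))) (qstage_pi (staged_in (pd (Y i) r n x))).
by apply: eventually_mono => M [[-> ->] ->]; apply: hc_d.
Qed.

Lemma colim_in_nat r r' h n (x : pobj (Y i) r n) :
  colim_map h (to_colim (staged_in x)) = to_colim (staged_in (pmap (Y i) r r' h n x)).
Proof.
apply: colim_eq.
have := eventually_and (eventually_and (qstage_map h (to_colim (staged_in x)))
  (qstage_pi (staged_in x))) (qstage_pi (staged_in (pmap (Y i) r r' h n x))).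
by apply: eventually_mono => M [[-> ->] ->]; apply: hc_nat.
Qed.

Definition colim_in : phom (Y i) colim :=
  @PHom (Y i) colim (fun r n x => to_colim (staged_in x)) colim_in_lin colim_in_d colim_in_nat.

End Injections.

Lemma colim_in_cocone i : heq (hcomp (y i) (colim_in i.+1)) (colim_in i).
Proof.
move=> r n x; apply/pi_eveq; exists i.+1 => M iM.
by rewrite /at_stage /= -(@stage_map_comp i i.+1 M) ?leqnSn ?iM // stage_mapS // stage_map_id.
Qed.

Section Cocone.
Context {Yinf : pch} (c : forall i, phom (Y i) Yinf).
Hypothesis c_colim : is_seq_colim y c.

Let c_cocone : forall i, heq (hcomp (y i) (c i.+1)) (c i) := c_colim.1.

Definition cval {r n} (a : staged r n) : pobj Yinf r n := hc (c (tag a)) r n (tagged a).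

Lemma c_stage_map i M r n x : (i <= M)%N ->
  hc (c M) r n (hc (stage_map i M) r n x) = hc (c i) r n x.
Proof.
elim: M => [|M IH]; first by rewrite leqn0 => /eqP <-; rewrite stage_map_id.
rewrite leq_eqVlt => /predU1P[<-|iM]; first by rewrite stage_map_id.
by rewrite stage_mapS // -IH //; apply: c_cocone.
Qed.

Lemma cval_at_stage {r n M} (a : staged r n) : (tag a <= M)%N ->
  hc (c M) r n (at_stage M a) = cval a.
Proof. exact: c_stage_map. Qed.

Lemma cval0 r n : cval (@staged0 r n) = 0.
Proof. exact: hc0. Qed.

Lemma cval_d r n (a : staged r n) : cval (staged_d a) = pd Yinf r n (cval a).
Proof. exact: esym (hc_d _ _ _ _). Qed.

Lemma cval_map r r' h n (a : staged r n) : cval (staged_map h a) = pmap Yinf r r' h n (cval a).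
Proof. exact: esym (hc_nat _ _ _ _ _ _). Qed.

Lemma cval_eveq r n (a b : staged r n) : eveq a b -> cval a = cval b.
Proof.
move=> [M0 ab]; pose M := maxn M0 (maxn (tag a) (tag b)).
have aM : (tag a <= M)%N by rewrite !leq_max leqnn orbT.
have bM : (tag b <= M)%N by rewrite !leq_max leqnn !orbT.
by rewrite -(cval_at_stage _ aM) -(cval_at_stage _ bM) ab // leq_maxl.
Qed.

Lemma cval_qstage {r n} (q : colim_space r n) :
  eventually (fun M => hc (c M) r n (qstage M q) = cval (repr q)).
Proof. exact: eventually_mono (fun M => @cval_at_stage r n M (repr q)) (eventually_ge _). Qed.

Lemma colim_out_lin r n a (q q' : colim_space r n) :
  cval (repr (a *: q + q')) = a *: cval (repr q) + cval (repr q').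
Proof.
have [M [e [e1 [e2 e3]]]] := eventually_witness (eventually_and (qstage_lin a q q')
  (eventually_and (cval_qstage (a *: q + q'))
     (eventually_and (cval_qstage q) (cval_qstage q')))).
by rewrite -e1 e hc_lin e2 e3.
Qed.

Lemma colim_out_d r n (q : colim_space r n) :
  pd Yinf r n (cval (repr q)) = cval (repr (colim_d q)).
Proof.
have [M [e [e1 e2]]] := eventually_witness (eventually_and (qstage_d q)
  (eventually_and (cval_qstage (colim_d q)) (cval_qstage q))).
by rewrite -e1 e -hc_d e2.
Qed.

Lemma colim_out_nat r r' h n (q : colim_space r n) :
  pmap Yinf r r' h n (cval (repr q)) = cval (repr (colim_map h q)).
Proof.
have [M [e [e1 e2]]] := eventually_witness (eventually_and (qstage_map h q)
  (eventually_and (cval_qstage (colim_map h q)) (cval_qstage q))).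
by rewrite -e1 e -hc_nat e2.
Qed.

Definition colim_out : phom colim Yinf :=
  @PHom colim Yinf (fun r n q => cval (repr q)) colim_out_lin colim_out_d colim_out_nat.

Lemma cval_repr {r n} (a : staged r n) : cval (repr (to_colim a)) = cval a.
Proof. by apply/cval_eveq/pi_eveq; rewrite /to_colim reprK. Qed.

(* Uniqueness in the universal property of Yinf makes w ; colim_out the identity. *)
Lemma colim_retract : exists w : phom Yinf colim,
  (forall r n e, cval (repr (hc w r n e)) = e) /\
  (forall r n (a : staged r n), hc w r n (cval a) = to_colim a).
Proof.
have [w [w_in _]] := c_colim.2 colim colim_in colim_in_cocone.
have [id_c [_ id_uniq]] := c_colim.2 Yinf c c_cocone.
have E1 : heq (hcomp w colim_out) id_c.
  by apply: id_uniq => i r n x; have /= -> := w_in i r n x; apply: cval_repr.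
have E2 : heq (hid Yinf) id_c by apply: id_uniq.
exists w; split=> [r n e | r n [i x]]; last exact: w_in.
by move: (E1 r n e); rewrite -(E2 r n e).
Qed.

Lemma cval_surj : exists lift : forall r n, pobj Yinf r n -> staged r n,
  forall r n e, cval (lift r n e) = e.
Proof. by have [w [wK _]] := colim_retract; exists (fun r n e => repr (hc w r n e)). Qed.

Lemma cval_eq_eveq r n (a b : staged r n) : cval a = cval b -> eveq a b.
Proof. by have [w [_ w_cval]] := colim_retract => ab; apply/pi_eveq; rewrite -!w_cval ab. Qed.

End Cocone.
End SeqColim.

Arguments staged : clear implicits.
Arguments colim_space {Y} y r n.
Arguments cval_surj {Y y Yinf c}.
Arguments cval_eq_eveq {Y y Yinf c} c_colim {r n}.
Arguments cval_at_stage {Y y Yinf c} c_colim {r n M}.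

(** * Objects of dimension at most one *)

(* For b <= 1, the coordinate of u on the basis vector onesmx 1 b. *)
Definition coord01 {b : nat} (u : 'rV[rat]_b) : rat := \sum_(j < b) u 0 j.

Lemma coord01_lin b : scalar (@coord01 b).
Proof.
by move=> a u v; rewrite /coord01 mulr_sumr -big_split; apply: eq_bigr => j _; rewrite !mxE.
Qed.

Lemma coord01_ones a b (u : 'rV[rat]_a) : coord01 (u *m onesmx a b) = coord01 u *+ b.
Proof.
rewrite /coord01 (eq_bigr (fun _ => \sum_(j < a) u 0 j)) ?sumr_const ?card_ord //.
by move=> j _; rewrite !mxE; apply: eq_bigr => i _; rewrite !mxE mulr1.
Qed.

Lemma coord01_unit (b : bool) : coord01 (onesmx 1 b) = b%:R.
Proof.
by rewrite /coord01 (eq_bigr (fun _ => 1)) ?sumr_const ?card_ord // => j _; rewrite !mxE.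
Qed.

Lemma coord01K (b : bool) (u : 'rV[rat]_b) : u = coord01 u *: onesmx 1 b.
Proof.
case: b u => u; apply/matrixP => i j; rewrite !mxE; last by case: j.
by rewrite mulr1 /coord01 big_ord1 !ord1.
Qed.

Section ZeroOneObjects.
Context {dim : nnR -> nat -> bool}
  {dim_dd : forall r n, ~~ [&& dim r n, dim r n.+1 & dim r n.+2]}
  {dim_conv : forall (r1 r2 r3 : nnR) n, val r1 <= val r2 -> val r2 <= val r3 ->
     dim r1 n -> dim r3 n -> dim r2 n}
  {dim_nat : forall (r r' : nnR) n, val r <= val r' ->
     dim r n -> dim r' n.+1 -> dim r' n && dim r n.+1}.

Local Notation X := (mk01 dim dim_dd dim_conv dim_nat).

Definition unit01 r n : pobj X r n := onesmx 1 (dim r n).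

Lemma unit01_d {r n} : dim r n -> pd X r n (unit01 r n) = unit01 r n.+1.
Proof. by move=> D; rewrite /= /unit01 onesmx_mul D. Qed.

Lemma unit01_map {r r'} h {n} : dim r n -> pmap X r r' h n (unit01 r n) = unit01 r' n.
Proof. by move=> D; rewrite /= /unit01 onesmx_mul D. Qed.

Lemma eq0_dim01 {r n} (u : pobj X r n) : ~~ dim r n -> u = 0.
Proof. by move/negbTE=> D; apply/matrixP => i [j hj]; exfalso; move: hj; rewrite D. Qed.

Lemma coord01_eq0 {r n} (u : pobj X r n) : ~~ dim r n -> coord01 u = 0.
Proof. by move/(eq0_dim01 u)->; rewrite /coord01 big1 // => j _; rewrite mxE. Qed.

Lemma hom01_ext (W : pch) (h1 h2 : phom X W) :
  (forall r n, dim r n -> hc h1 r n (unit01 r n) = hc h2 r n (unit01 r n)) -> heq h1 h2.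
Proof.
move=> h12 r n u.
have /orP[D|D] := orbN (dim r n).
  have -> : u = coord01 u *: unit01 r n by exact: coord01K.
  by rewrite !hcZ h12.
by rewrite (eq0_dim01 u D) !hc0.
Qed.

Section Hom01.
Variables (W : pch) (E : forall r n, pobj W r n).
Hypotheses (E_d : forall r n, dim r n -> pd W r n (E r n) = E r n.+1)
  (E_map : forall r r' h n, dim r n -> pmap W r r' h n (E r n) = E r' n)
  (E_0 : forall r n, ~~ dim r n -> E r n = 0).

Lemma hom01_lin r n : linear (fun u : pobj X r n => coord01 u *: E r n).
Proof. by move=> a u v; rewrite coord01_lin scalerDl scalerA. Qed.

Lemma hom01_d r n (u : pobj X r n) :
  pd W r n (coord01 u *: E r n) = coord01 (pd X r n u) *: E r n.+1.
Proof.
rewrite (linear_funZ (pd_lin W r n)).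
rewrite [coord01 _ in RHS](coord01_ones (dim r n) (dim r n.+1) u).
have /orP[D|D] := orbN (dim r n); last by rewrite coord01_eq0 // mul0rn !scale0r.
by rewrite E_d //; case: (boolP (dim r n.+1)) => [_|/E_0->]; rewrite ?mulr1n ?scaler0.
Qed.

Lemma hom01_map r r' h n (u : pobj X r n) :
  pmap W r r' h n (coord01 u *: E r n) = coord01 (pmap X r r' h n u) *: E r' n.
Proof.
rewrite (linear_funZ (pmap_lin W r r' h n)).
rewrite [coord01 _ in RHS](coord01_ones (dim r n) (dim r' n) u).
have /orP[D|D] := orbN (dim r n); last by rewrite coord01_eq0 // mul0rn !scale0r.
by rewrite E_map //; case: (boolP (dim r' n)) => [_|/E_0->]; rewrite ?mulr1n ?scaler0.
Qed.

Definition hom01 : phom X W :=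
  @PHom X W (fun r n u => coord01 u *: E r n) hom01_lin hom01_d hom01_map.

Lemma hom01_unit r n : dim r n -> hc hom01 r n (unit01 r n) = E r n.
Proof. by move=> D; rewrite /= /unit01 coord01_unit D scale1r. Qed.

End Hom01.

End ZeroOneObjects.

(** * The presentation of S^k_[s,t) *)

(* The structure map, extended by zero when b < a. *)
Definition pmap_tot {W : pch} (a b : nnR) n (x : pobj W a n) : pobj W b n :=
  if (val a <= val b) =P true is ReflectT h then pmap W a b h n x else 0.

Lemma pmap_totE {W : pch} {a b : nnR} (h : val a <= val b) n x :
  pmap_tot a b n x = pmap W a b h n x.
Proof. by rewrite /pmap_tot; case: eqP => [h'|]; [rewrite (eq_irrelevance h' h) | rewrite h]. Qed.

Lemma pmap_tot_comp {W : pch} {a b c : nnR} (hab : val a <= val b) (hbc : val b <= val c) n x :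
  pmap W b c hbc n (pmap_tot a b n x) = pmap_tot a c n x.
Proof.
have hac := le_trans hab hbc.
by rewrite (pmap_totE hab) (pmap_totE hac) (pmap_comp _ _ _ _ _ _ hac).
Qed.

Section Sphere.
Variables (k : nat) (s : R) (t : option R).
Hypotheses (s_ge0 : 0 <= s) (s_lt_t : ltRo s t).

Local Notation S := (Sph k s t).
Local Notation sdim := (sdim k s t).
Local Notation gen :=
  (@unit01 (Defs.sdim k s t) (sdim_dd k s t) (sdim_comp k s t) (sdim_dnat k s t)).

Definition s0 : nnR := exist _ s s_ge0.
(* When t = oo there is no generator at time t, and t0 := s0 is a dummy value. *)
Definition t0 : nnR := if t is Some u then insubd s0 u else s0.

Lemma val_t0 {u} : t = Some u -> val t0 = u.
Proof.
move=> tu; rewrite /t0 tu insubdK //; move: s_lt_t; rewrite tu /=.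
by move/ltW; apply: le_trans.
Qed.

Lemma s0_le_t0 : val s0 <= val t0.
Proof.
case tu: t => [u|]; last by rewrite /t0 tu.
by rewrite (val_t0 tu) /=; move: s_lt_t; rewrite tu => /ltW.
Qed.

Lemma sdim_s0 : sdim s0 k.
Proof. by rewrite /Defs.sdim /s0 /= lexx eqxx; case: t s_lt_t => [u /= ->|]. Qed.

Lemma sdim_succ r : ~~ sdim r k.+1.
Proof. by rewrite /Defs.sdim; case: (_ <= _); case: before => /=; lia. Qed.

Lemma sdim_top {r} : (0 < k)%N -> t != None -> val t0 <= val r -> sdim r k.-1 && sdim r k.
Proof.
case tu: t => [u|] // k0 _; rewrite (val_t0 tu) /Defs.sdim => ur.
have sr : s <= val r by move: s_lt_t; rewrite tu /= => /ltW /le_trans; apply.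
by rewrite sr /= ltNge ur /= k0 prednK // eqxx !orbT.
Qed.

Lemma sdim_cases r n : sdim r n ->
  (n = k /\ val s0 <= val r) \/ [/\ n = k.-1, (0 < k)%N, t != None & val t0 <= val r].
Proof.
rewrite /Defs.sdim; case: (boolP (s <= val r)) => // sr /=.
case tu: t => [u|] /=; last by rewrite orbF => /eqP->; left.
rewrite -(val_t0 tu) -leNgt; case: leP => t0r /=; last by rewrite orbF => /eqP->; left.
by case/andP=> k0 /orP[/eqP->|/eqP<-]; [left | right].
Qed.

Lemma sdim_notk {r} : val s0 <= val r -> ~~ sdim r k ->
  [/\ k == 0%N, t != None & val t0 <= val r].
Proof.
rewrite /Defs.sdim /= => -> /=; rewrite eqxx andbT.
case tu: t => [u|] //=; rewrite -(val_t0 tu) -leNgt.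
by case: leP => //= t0r; rewrite andbT lt0n negbK.
Qed.

Lemma Sph_hom_ext (W : pch) (h1 h2 : phom S W) :
  hc h1 s0 k (gen s0 k) = hc h2 s0 k (gen s0 k) ->
  ((0 < k)%N -> t != None -> hc h1 t0 k.-1 (gen t0 k.-1) = hc h2 t0 k.-1 (gen t0 k.-1)) ->
  heq h1 h2.
Proof.
move=> h12_s0 h12_t0; apply: hom01_ext => r n /sdim_cases[[-> s0r] | [-> k0 tN t0r]].
  by rewrite -(unit01_map s0r sdim_s0) -!hc_nat h12_s0.
have /andP[top _] := sdim_top k0 tN (lexx _).
by rewrite -(unit01_map t0r top) -!hc_nat h12_t0.
Qed.

(* x and z are families over all degrees only so that x n has the type required in
   degree n; just x k and z k.-1 matter. *)
Definition Sph_rel (W : pch) (x : forall n, pobj W s0 n) (z : forall n, pobj W t0 n) :=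
  [/\ pd W s0 k (x k) = 0,
      (0 < k)%N -> t != None ->
        pd W t0 k.-1 (z k.-1) = pmap W s0 t0 s0_le_t0 k.-1.+1 (x k.-1.+1)
    & k == 0%N -> t != None -> pmap W s0 t0 s0_le_t0 k (x k) = 0].

Lemma Sph_rel_hom {W : pch} (f : phom S W) :
  Sph_rel W (fun n => hc f s0 n (gen s0 n)) (fun n => hc f t0 n (gen t0 n)).
Proof.
split=> [|k0 tN|/eqP k0 tN]; rewrite ?hc_d ?hc_nat.
- by rewrite (eq0_dim01 (pd S s0 k (gen s0 k))) ?hc0 // sdim_succ.
- have /andP[top _] := sdim_top k0 tN (lexx _).
  by rewrite (unit01_d top) (unit01_map _ _) // prednK // sdim_s0.
- rewrite (eq0_dim01 (pmap S s0 t0 _ k (gen s0 k))) ?hc0 //.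
  by case tu: t tN => [u|] // _; rewrite /Defs.sdim (val_t0 tu) /= ltxx k0 !andbF.
Qed.

Section SphHom.
Context {W : pch} {x : forall n, pobj W s0 n} {z : forall n, pobj W t0 n}.
Hypothesis xz_rel : Sph_rel W x z.

Definition Sph_gen r n : pobj W r n :=
  if sdim r n then if n == k then pmap_tot s0 r n (x n) else pmap_tot t0 r n (z n) else 0.

Lemma Sph_gen_d r n : sdim r n -> pd W r n (Sph_gen r n) = Sph_gen r n.+1.
Proof.
case: xz_rel => x_cocycle z_d _ D; rewrite /Sph_gen D.
case/sdim_cases: D => [[-> s0r] | [-> k0 tN t0r]].
  rewrite eqxx (negbTE (sdim_succ r)) (pmap_totE s0r) pmap_d x_cocycle.
  exact: (linear_fun0 (pmap_lin _ _ _ _ _)).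
have /andP[_ top] := sdim_top k0 tN t0r.
have top' : sdim r k.-1.+1 by rewrite prednK.
have -> : (k.-1 == k) = false by apply/eqP; lia.
have kk : (k.-1.+1 == k) = true by rewrite prednK // eqxx.
rewrite top' kk (pmap_totE t0r) pmap_d z_d //.
by rewrite (pmap_comp _ _ _ _ _ _ (le_trans s0_le_t0 t0r)) -pmap_totE.
Qed.

Lemma Sph_gen_map r r' h n : sdim r n -> pmap W r r' h n (Sph_gen r n) = Sph_gen r' n.
Proof.
case: xz_rel => _ _ x_dies D; rewrite /Sph_gen D.
case/sdim_cases: D => [[-> s0r] | [-> k0 tN t0r]].
  have s0r' := le_trans s0r h.
  rewrite eqxx (pmap_tot_comp s0r); case: ifP => // /negbT /(sdim_notk s0r')[k_0 tN t0r'].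
  rewrite -(pmap_tot_comp s0_le_t0 t0r') (pmap_totE s0_le_t0) x_dies //.
  exact: (linear_fun0 (pmap_lin _ _ _ _ _)).
have /andP[top _] := sdim_top k0 tN (le_trans t0r h).
have -> : (k.-1 == k) = false by apply/eqP; lia.
by rewrite top (pmap_tot_comp t0r).
Qed.

Lemma Sph_gen_0 r n : ~~ sdim r n -> Sph_gen r n = 0.
Proof. by rewrite /Sph_gen => /negbTE->. Qed.

Definition Sph_hom : phom S W := hom01 W Sph_gen Sph_gen_d Sph_gen_map Sph_gen_0.

Lemma Sph_hom_s0 : hc Sph_hom s0 k (gen s0 k) = x k.
Proof. by rewrite hom01_unit ?sdim_s0 // /Sph_gen sdim_s0 eqxx (pmap_totE (lexx _)) pmap_id. Qed.

Lemma Sph_hom_t0 : (0 < k)%N -> t != None -> hc Sph_hom t0 k.-1 (gen t0 k.-1) = z k.-1.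
Proof.
move=> k0 tN; have /andP[top _] := sdim_top k0 tN (lexx _).
have k1k : (k.-1 == k) = false by apply/eqP; lia.
by rewrite hom01_unit // /Sph_gen top k1k (pmap_totE (lexx _)) pmap_id.
Qed.

End SphHom.

Section Compactness.
Variables (Y : nat -> pch) (y : forall i, phom (Y i) (Y i.+1)).
Variables (Yinf : pch) (c : forall i, phom (Y i) Yinf).
Hypothesis c_colim : is_seq_colim y c.

Lemma Sph_rel_eventually {x : forall n, staged Y s0 n} {z : forall n, staged Y t0 n} :
  Sph_rel Yinf (fun n => cval c (x n)) (fun n => cval c (z n)) ->
  eventually (fun M => Sph_rel (Y M) (fun n => at_stage y M (x n)) (fun n => at_stage y M (z n))).
Proof.
case=> x_cocycle z_d x_dies.
have E1 : eventually (fun M => pd (Y M) s0 k (at_stage y M (x k)) = 0).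
  have := cval_eq_eveq c_colim (staged_d (x k)) staged0.
  rewrite cval_d cval0 => /(_ x_cocycle); apply: eventually_mono => M.
  by rewrite at_stage_d at_stage0.
have E2 : eventually (fun M => (0 < k)%N -> t != None ->
    pd (Y M) t0 k.-1 (at_stage y M (z k.-1)) =
    pmap (Y M) s0 t0 s0_le_t0 k.-1.+1 (at_stage y M (x k.-1.+1))).
  apply: eventually_if => k0; apply: eventually_if => tN.
  have := cval_eq_eveq c_colim (staged_d (z k.-1)) (staged_map s0_le_t0 (x k.-1.+1)).
  rewrite cval_d cval_map => /(_ (z_d k0 tN)); apply: eventually_mono => M.
  by rewrite at_stage_d at_stage_map.
have E3 : eventually (fun M => k == 0%N -> t != None ->
    pmap (Y M) s0 t0 s0_le_t0 k (at_stage y M (x k)) = 0).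
  apply: eventually_if => k0; apply: eventually_if => tN.
  have := cval_eq_eveq c_colim (staged_map s0_le_t0 (x k)) staged0.
  rewrite cval_map cval0 => /(_ (x_dies k0 tN)); apply: eventually_mono => M.
  by rewrite at_stage_map at_stage0.
by apply: eventually_mono (eventually_and E1 (eventually_and E2 E3)) => M [? [? ?]].
Qed.

Lemma Sph_hom_factor (f : phom S Yinf) : exists M (g : phom S (Y M)), heq (hcomp g (c M)) f.
Proof.
have [lift liftK] := cval_surj c_colim.
pose x n := lift s0 n (hc f s0 n (gen s0 n)).
pose z n := lift t0 n (hc f t0 n (gen t0 n)).
have xz : Sph_rel Yinf (fun n => cval c (x n)) (fun n => cval c (z n)).
  by case: (Sph_rel_hom f) => *; split; rewrite /x /z ?liftK.
have [M [xz_M [xM zM]]] := eventually_witness (eventually_and (Sph_rel_eventually xz)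
  (eventually_and (eventually_ge (tag (x k))) (eventually_ge (tag (z k.-1))))).
exists M, (Sph_hom xz_M); apply: Sph_hom_ext => [|k0 tN] /=.
  by move: (Sph_hom_s0 xz_M) => /= ->; rewrite (cval_at_stage c_colim _ xM) liftK.
by move: (Sph_hom_t0 xz_M k0 tN) => /= ->; rewrite (cval_at_stage c_colim _ zM) liftK.
Qed.

Lemma Sph_hom_colim_eq i j (g : phom S (Y i)) (g' : phom S (Y j)) :
  heq (hcomp g (c i)) (hcomp g' (c j)) ->
  clos_refl_sym_trans _ (colim_step y) (existT _ i g) (existT _ j g').
Proof.
move=> gg'.
have E1 := cval_eq_eveq c_colim (staged_in (hc g s0 k (gen s0 k)))
  (staged_in (hc g' s0 k (gen s0 k))) (gg' _ _ _).
have E2 : eventually (fun M => (0 < k)%N -> t != None ->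
    at_stage y M (staged_in (hc g t0 k.-1 (gen t0 k.-1))) =
    at_stage y M (staged_in (hc g' t0 k.-1 (gen t0 k.-1)))).
  apply: eventually_if => k0; apply: eventually_if => tN.
  exact: (cval_eq_eveq c_colim (staged_in (hc g t0 k.-1 (gen t0 k.-1)))
    (staged_in (hc g' t0 k.-1 (gen t0 k.-1))) (gg' _ _ _)).
have [M [[e1 e2] [iM jM]]] := eventually_witness (eventually_and (eventually_and E1 E2)
  (eventually_and (eventually_ge i) (eventually_ge j))).
apply: rst_trans (colim_step_stage_map y g iM) _.
apply: rst_trans _ (rst_sym _ _ _ _ (colim_step_stage_map y g' jM)).
by apply/rst_step/cs_heq/Sph_hom_ext => [|k0 tN]; [apply: e1 | apply: e2].
Qed.

End Compactness.

End Sphere.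

Theorem mainTheorem4 :
  forall (k : nat) (s : R) (t : option R),
    0 <= s -> ltRo s t -> compact_rel_I_cell (Sph k s t).
Proof.
move=> k s t s_ge0 s_lt_t Y y Yinf c [_ c_colim]; split.
  exact: (@Sph_hom_factor k s t s_ge0 s_lt_t _ _ _ _ c_colim).
exact: (@Sph_hom_colim_eq k s t s_ge0 s_lt_t _ _ _ _ c_colim).
Qed.
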